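(* Let $\pi_0$ be an irreducible representation of $\mathrm{SO}(V)$ (if $d$ is even, assume $\mathrm{char}\,\mathcal C\ne2$). Then $$\Gamma(\pi_0,\chi)=\chi(-2)^{-d}\,j(\pi_0,\chi)\cdot\begin{cases}\omega_{\pi_0}(-1)&d\text{ even},\\1&d\text{ odd},\end{cases}$$ where $j(\pi_0,\chi)\,\mathrm{id}_{\pi_0}=|\mathfrak g|^{-1/2}\sum_{g\in\mathrm{SO}(V),\,\det(\mathrm{id}+g)\ne0}\chi(\det(\mathrm{id}_V+g))\pi_0(g)$.
   Context: Let $\mathbb F$ be a finite field of odd cardinality $q$ and $\mathcal C$ an algebraically closed field of characteristic not dividing $q$ with fixed $\sqrt q$. Let $(V,\langle\cdot,\cdot\rangle)$ be a nondegenerate symmetric bilinear space over $\mathbb F$ of dimension $d$, $G(V)=\mathrm O(V)$, $\mathrm{SO}(V)=\{g\in\mathrm O(V):\det g=1\}$, $\mathfrak g$ the Lie algebra of $\mathrm O(V)$, $\chi:\mathbb F^\times\to\mathcal C^\times$ a character. For an irreducible representation $\pi$ of $\mathrm O(V)$, $\Gamma(\pi,\chi)$ is defined as follows. Doubling: $V^\square=V^+\oplus V^-$ with form $\langle v_1,v_2\rangle-\langle w_1,w_2\rangle$ on $v_1^++w_1^-,v_2^++w_2^-$; $V^\Delta=\{v^++v^-\}$; $\iota(g_1,g_2)(v^++w^-)=(g_1v)^++(g_2w)^-$; $P_V$ the stabilizer of $V^\Delta$ in $\mathrm O(V^\square)$, $N_V$ its unipotent radical, $w_V=\iota(\mathrm{id},-\mathrm{id})$;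 $I_V(\mu)=\{f:f(pg)=\mu(\det(p|_{V^\Delta}))f(g),\,p\in P_V\}$; $(M_V(\chi)f)(g)=|\mathfrak g|^{-1/2}\sum_{u\in N_V}f(w_Vug)$ maps $I_V(\chi)\to I_V(\chi^{-1})$; $Z_{V,\mu,\pi}(f)=\sum_{g\in\mathrm O(V)}f(\iota(g,\mathrm{id}))\pi(g)$; $f_{0,V}\in I_V(\chi)$ is supported on $P_V$ with $f_{0,V}(\mathrm{id})=1$; and $\Gamma(\pi,\chi)\,\mathrm{id}_\pi=Z_{V,\chi^{-1},\pi}(M_V(\chi)f_{0,V})$. Extension to $\mathrm{SO}(V)$: if $d$ is odd, $\Gamma(\pi_0,\chi):=\Gamma(\pi_0^+,\chi)$ where $\pi_0^+$ is the extension of $\pi_0$ to $\mathrm O(V)=\{\pm\mathrm{id}\}\times\mathrm{SO}(V)$ with $\pi_0^+(-\mathrm{id})=\mathrm{id}$. If $d$ is even: if $\pi_0$ extends to an irreducible representation $\pi_0'$ of $\mathrm O(V)$, $\Gamma(\pi_0,\chi):=\Gamma(\pi_0',\chi)$ (independent of the extension); otherwise $\Gamma(\pi_0,\chi):=\Gamma(\mathrm{Ind}_{\mathrm{SO}(V)}^{\mathrm O(V)}\pi_0,\chi)$ (this induced representation is irreducible). $\omega_{\pi_0}$ is the central character of $\pi_0$. *)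

From HB Require Import structures.
From mathcomp Require Import all_boot all_order all_algebra all_field.
Set Implicit Arguments. Unset Strict Implicit. Unset Printing Implicit Defensive.
Import GRing.Theory.
Local Open Scope ring_scope.

(* Conventions: V = column vectors 'cV[F]_d, <v,w> = v^T B w, with B the
   (symmetric, nondegenerate) Gram matrix.  Linear maps act on the left:
   g v = g *m v.  Representations pi : 'M[F]_d -> 'M[C]_n act on column
   vectors of C^n on the left, pi (g h) = pi g * pi h (values outside the
   group are irrelevant). *)

Section Defs.
Variables (F : finFieldType) (C : fieldType) (d : nat) (B : 'M[F]_d).

Definition isO (m : nat) (Bm : 'M[F]_m) (g : 'M[F]_m) : bool :=
  g^T *m Bm *m g == Bm.
Definition isSO (g : 'M[F]_d) : bool := isO B g && (\det g == 1).

(* Lie algebra of O(V) and |g|^{1/2} := sqrtq ^ (log_q |g|) *)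
Definition lieO : {set 'M[F]_d} :=
  [set X : 'M[F]_d | X^T *m B + B *m X == 0].
Definition lie_sqrt_card (sqrtq : C) : C :=
  sqrtq ^+ trunc_log #|F| #|lieO|.

Definition Bsq : 'M[F]_(d + d) := block_mx B 0 0 (- B).
Definition Delta : 'M[F]_(d + d, d) := col_mx 1%:M 1%:M.  (* basis of V^Delta *)
Definition restrD (G : 'M[F]_(d + d)) : 'M[F]_d := usubmx (G *m Delta).
  (* matrix of G|_{V^Delta} in the basis Delta, when G stabilizes V^Delta *)
Definition inP (G : 'M[F]_(d + d)) : bool :=
  isO Bsq G && (G *m Delta == Delta *m restrD G).
(* unipotent radical: trivial on V^Delta and on V^sq / V^Delta *)
Definition inN (G : 'M[F]_(d + d)) : bool :=
  [&& isO Bsq G, (G - 1%:M) *m Delta == 0 &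
      [exists M : 'M[F]_(d, d + d), G - 1%:M == Delta *m M]].
Definition wV : 'M[F]_(d + d) := block_mx 1%:M 0 0 (- 1%:M).
Definition iotaV (g1 g2 : 'M[F]_d) : 'M[F]_(d + d) := block_mx g1 0 0 g2.

Variables (sqrtq : C) (chi : F -> C).

Definition f0V (G : 'M[F]_(d + d)) : C :=
  if inP G then chi (\det (restrD G)) else 0.
Definition MV (f : 'M[F]_(d + d) -> C) (G : 'M[F]_(d + d)) : C :=
  (lie_sqrt_card sqrtq)^-1 * \sum_(u : 'M[F]_(d + d) | inN u) f (wV *m u *m G).
Definition ZV (n : nat) (pi : 'M[F]_d -> 'M[C]_n) (f : 'M[F]_(d + d) -> C)
  : 'M[C]_n := \sum_(g : 'M[F]_d | isO B g) f (iotaV g 1%:M) *: pi g.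
Definition GammaOp (n : nat) (pi : 'M[F]_d -> 'M[C]_n) : 'M[C]_n :=
  ZV pi (MV f0V).

Definition JOp (n : nat) (pi0 : 'M[F]_d -> 'M[C]_n) : 'M[C]_n :=
  (lie_sqrt_card sqrtq)^-1 *:
    \sum_(g : 'M[F]_d | isSO g && (\det (1%:M + g) != 0))
       chi (\det (1%:M + g)) *: pi0 g.

Definition is_rep (G : pred 'M[F]_d) (n : nat) (pi : 'M[F]_d -> 'M[C]_n) : Prop :=
  pi 1%:M = 1%:M /\ {in G &, forall g h, pi (g *m h) = pi g *m pi h}.
(* irreducible: nonzero, and no invariant subspace (column space of U)
   other than 0 and C^n *)
Definition is_irrep (G : pred 'M[F]_d) (n : nat) (pi : 'M[F]_d -> 'M[C]_n) : Prop :=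
  [/\ is_rep G pi, (0 < n)%N &
      forall U : 'M[C]_n,
        (forall g, G g -> ((pi g *m U)^T <= U^T)%MS) ->
        U = 0 \/ \rank U = n].

(* extension pi0^+ of pi0 to O(V) = {+-1} x SO(V) (d odd) *)
Definition plus_ext (n : nat) (pi0 : 'M[F]_d -> 'M[C]_n) (g : 'M[F]_d) : 'M[C]_n :=
  if isSO g then pi0 g else pi0 (- g).

(* a fixed element of O(V) \ SO(V) and the induced representation
   Ind_{SO}^{O} pi0, realised on functions f with f(s x) = pi0(s) f(x),
   coordinates (f(1), f(h)) *)
Definition hO : 'M[F]_d := odflt 1%:M [pick h | isO B h && (\det h != 1)].
Definition IndSO (n : nat) (pi0 : 'M[F]_d -> 'M[C]_n) (g : 'M[F]_d)
  : 'M[C]_(n + n) :=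
  if isSO g then block_mx (pi0 g) 0 0 (pi0 (hO *m g *m invmx hO))
  else block_mx 0 (pi0 (g *m invmx hO)) (pi0 (hO *m g)) 0.

(* "Gamma(pi0, chi) = c" for pi0 a representation of SO(V), following the
   extension of Gamma from O(V) to SO(V). *)
Definition GammaSO_eq (n : nat) (pi0 : 'M[F]_d -> 'M[C]_n) (c : C) : Prop :=
  if odd d then GammaOp (plus_ext pi0) = c%:M
  else
    (forall pi' : 'M[F]_d -> 'M[C]_n,
        is_irrep (isO B) pi' -> {in isSO, pi' =1 pi0} -> GammaOp pi' = c%:M)
    /\ ((~ exists pi' : 'M[F]_d -> 'M[C]_n,
            is_irrep (isO B) pi' /\ {in isSO, pi' =1 pi0}) ->
        GammaOp (IndSO pi0) = c%:M).

End Defs.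

From HB Require Import structures.
From mathcomp Require Import all_boot all_order all_algebra all_field.
Import GRing.Theory.
Local Open Scope ring_scope.
Set Implicit Arguments. Unset Strict Implicit. Unset Printing Implicit Defensive.

(* In the doubling zeta integral, (M_V(chi) f_{0,V})(iota(g, 1)) is a
   sum over N_V, whose elements are the u_X = 1 + Delta X diffV with X in
   the Lie algebra.  The element w_V u_X iota(g, 1) lies in P_V iff
   2 X (g - 1) = -(g + 1); then its restriction to V^Delta is (g - 1)/2.  So the sum
   is empty when g - 1 is singular and otherwise has the single term at the Cayley
   transform X = -(g + 1)(g - 1)^-1 / 2.  Substituting g = -h, and using that
   det(1 + h) != 0 forces det h = 1 for h in O(V), gives
     Gamma(pi, chi) = chi(-2)^-d |g|^-1/2 sum_{h in SO(V), det(1+h) != 0}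
                        chi(det(1 + h)) pi(-h).
   For d odd, pi_0^+(-h) = pi_0(h).  For d even, pi(-h) = pi_0(-1) pi_0(h) for every
   extension pi of pi_0, and the induced representation is block diagonal on SO(V),
   its second block being pi_0 conjugated by an element of O(V) \ SO(V), which does
   not change the sum.  Schur's lemma makes j(pi_0, chi) and pi_0(-1) scalars. *)

Lemma addr_eq_opp_double (V : zmodType) (a b y : V) :
  (a + y == - (b + y)) = (y *+ 2 == - (a + b)).
Proof. by rewrite -addr_eq0 -[RHS]addr_eq0 addrACA addrC mulr2n. Qed.

Lemma scaler_half_double (K : fieldType) (V : lmodType K) (v : V) :
  (2%:R : K) != 0 -> (2%:R : K)^-1 *: (v *+ 2) = v.
Proof. by move=> h2; rewrite -scaler_nat scalerA mulVf // scale1r. Qed.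

Lemma detN (R : comNzRingType) m (A : 'M[R]_m) : \det (- A) = (-1) ^+ m * \det A.
Proof. by rewrite -scaleN1r detZ. Qed.

Lemma mulN1mx (R : pzRingType) m n (A : 'M[R]_(m, n)) : - 1%:M *m A = - A.
Proof. by rewrite mulNmx mul1mx. Qed.

Lemma two_neq0_odd_card (F : finFieldType) : odd #|F| -> (2%:R : F) != 0.
Proof.
move=> oddF; apply/negP => /eqP h2.
have c2 : (2 \in [pchar F])%N by rewrite inE /= h2 eqxx.
move: oddF (finNzRing_gt1 F); rewrite (card_pprimeChar c2) oddX orbF.
by move/eqP => ->.
Qed.

Lemma irrep_scalar_commutant (F : finFieldType) (C : closedFieldType) (d : nat)
    (G : pred 'M[F]_d) (n : nat) (pi : 'M[F]_d -> 'M[C]_n) (A : 'M[C]_n) :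
  is_irrep G pi -> (forall g, G g -> pi g *m A = A *m pi g) ->
  exists a : C, A = a%:M.
Proof.
case=> _ n_gt0 irr commA.
have [a] : exists a, root (char_poly A) a.
  by apply/closed_rootP; rewrite size_char_poly -(prednK n_gt0).
rewrite -eigenvalue_root_char => /eigenvalueP [v Av v_neq0].
exists a; have [/eqP|rk_n] : a%:M - A = 0 \/ \rank (a%:M - A) = n.
- apply: irr => g Gg.
  by rewrite mulmxBr commA // scalar_mxC -mulmxBl trmx_mul submxMl.
- by rewrite subr_eq0 => /eqP.
- have Uu : a%:M - A \in unitmx by rewrite -row_free_unit /row_free rk_n.
  have := mulmxK Uu v; rewrite mulmxBr Av mul_mx_scalar subrr mul0mx => v0.
  by rewrite -v0 eqxx in v_neq0.
Qed.

Section OrthogonalGroup.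
Variables (F : finFieldType) (d : nat) (B : 'M[F]_d).

Lemma isO_mul m (Bm a b : 'M[F]_m) : isO Bm a -> isO Bm b -> isO Bm (a *m b).
Proof.
move=> /eqP Oa /eqP Ob; apply/eqP.
by rewrite trmx_mul !mulmxA -(mulmxA b^T) -(mulmxA b^T) Oa.
Qed.

Lemma isON (h : 'M[F]_d) : isO B (- h) = isO B h.
Proof. by rewrite /isO [(- _)^T]linearN /= mulNmx mulmxN mulNmx opprK. Qed.

Lemma isSO1 : isSO B 1%:M.
Proof. by rewrite /isSO /isO trmx1 mul1mx mulmx1 det1 !eqxx. Qed.

Lemma isSON (h : 'M[F]_d) : (2%:R : F) != 0 -> isSO B h ->
  isSO B (- h) = ~~ odd d.
Proof.
move=> h2 /andP [Oh /eqP dh].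
rewrite /isSO isON Oh detN dh mulr1 -signr_odd; case: (odd d); last exact: eqxx.
by rewrite expr1 -subr_eq0 -opprD oppr_eq0 -mulr2n (negbTE h2).
Qed.

Lemma isO_hO : isO B (hO B).
Proof. by rewrite /hO; case: pickP => [h /andP [] | _] //=; case/andP: isSO1. Qed.

Hypothesis detB : \det B != 0.

Lemma isO_unit (a : 'M[F]_d) : isO B a -> a \in unitmx.
Proof.
move=> /eqP Oa; rewrite unitmxE unitfE; apply: contra detB => /eqP a0.
by rewrite -Oa !det_mulmx a0 mulr0.
Qed.

Lemma det_isO_eq1 (h : 'M[F]_d) : isO B h -> \det (1%:M + h) != 0 -> \det h = 1.
Proof.
move=> /eqP Oh nz.
have e : (1%:M + h)^T *m B *m h = B *m (1%:M + h).
  by rewrite [(_ + _)^T]linearD /= trmx1 mulmxDl mul1mx mulmxDl Oh mulmxDr mulmx1 addrC.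
have := congr1 determinant e; rewrite !det_mulmx det_tr => e2.
apply: (mulfI (mulf_neq0 detB nz)).
by rewrite mulr1 [\det B * _]mulrC e2 mulrC.
Qed.

Lemma conj_inj (a : 'M[F]_d) : a \in unitmx ->
  injective (fun k : 'M[F]_d => invmx a *m k *m a).
Proof.
move=> au x y /(congr1 (fun M => a *m M *m invmx a)).
by rewrite /= !mulmxA !mulmxK // !mulmxV // !mul1mx.
Qed.

Lemma det_conj (a k : 'M[F]_d) : a \in unitmx -> \det (invmx a *m k *m a) = \det k.
Proof.
move=> au; rewrite !det_mulmx det_inv mulrC mulrA mulrC.
by rewrite mulfV ?mulr1 // -unitfE -unitmxE.
Qed.

Lemma det1D_conj (a k : 'M[F]_d) : a \in unitmx ->
  \det (1%:M + invmx a *m k *m a) = \det (1%:M + k).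
Proof.
move=> au; rewrite -(det_conj (1%:M + k) au).
by rewrite mulmxDr mulmxDl mulmx1 mulVmx.
Qed.

Lemma isO_conj (a k : 'M[F]_d) : isO B a -> isO B (invmx a *m k *m a) = isO B k.
Proof.
move=> Oa; have au := isO_unit Oa.
have aTu : a^T \in unitmx by rewrite unitmx_tr.
have Bainv : (invmx a)^T *m B *m invmx a = B.
  by rewrite -{1}(eqP Oa) !mulmxA -trmx_mul mulmxV // trmx1 mul1mx mulmxK.
have e : (invmx a *m k *m a)^T *m B *m (invmx a *m k *m a)
         = a^T *m (k^T *m B *m k) *m a.
  rewrite !trmx_mul -!mulmxA (mulmxA (invmx a)^T) (mulmxA ((invmx a)^T *m B)).
  by rewrite Bainv -?mulmxA.
rewrite /isO e -[X in _ *m a == X](eqP Oa); apply/eqP/eqP => [h|->//].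
by rewrite -(mulKmx aTu (_ *m _ *m k)) -(mulmxK au (a^T *m _)) h mulmxK // mulKmx.
Qed.

Lemma isSO_conj (a k : 'M[F]_d) : isO B a -> isSO B (invmx a *m k *m a) = isSO B k.
Proof. by move=> Oa; rewrite /isSO isO_conj // det_conj // isO_unit. Qed.

End OrthogonalGroup.

Section Doubling.
Variables (F : finFieldType) (d : nat) (B : 'M[F]_d).
Local Notation D := (Delta F d).

(* The map V^sq -> V, v^+ + w^- |-> v - w, whose kernel is V^Delta. *)
Definition diffV : 'M[F]_(d, d + d) := row_mx 1%:M (- 1%:M).
Definition uN (X : 'M[F]_d) : 'M[F]_(d + d) := 1%:M + D *m X *m diffV.

Lemma diffV_Delta : diffV *m D = 0.
Proof. by rewrite /diffV /Delta mul_row_col mulmx1 mulNmx mul1mx subrr. Qed.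

Lemma trDelta_Bsq : D^T *m Bsq B = B *m diffV.
Proof.
rewrite /Delta /Bsq /diffV tr_col_mx trmx1 mul_row_block mul_mx_row !mul1mx.
by rewrite addr0 add0r mulmxN mulmx1.
Qed.

Lemma Bsq_Delta : Bsq B *m D = diffV^T *m B.
Proof.
rewrite /Delta /Bsq /diffV tr_row_mx mul_block_col mul_col_mx.
by rewrite ?mulmx1 ?mulmx0 ?mul0mx ?addr0 ?add0r linearN /= trmx1 mulNmx mul1mx.
Qed.

Lemma inN_uN (u : 'M[F]_(d + d)) : inN B u -> exists X, u = uN X.
Proof.
case/and3P => _ /eqP uD /existsP [M /eqP eM].
have eu : u = 1%:M + D *m M by rewrite -eM addrC subrK.
rewrite eM /Delta mul_col_mx mul1mx mul_col_mx -/D -col_mx0 in uD.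
case/eq_col_mx: uD => MD _; move: MD.
rewrite -[M]hsubmxK /Delta mul_row_col !mulmx1 => /eqP; rewrite addr_eq0 => /eqP MR.
exists (lsubmx M).
by rewrite eu /uN -mulmxA /diffV mul_mx_row mulmxN mulmx1 MR opprK -MR hsubmxK.
Qed.

Lemma isO_uN (X : 'M[F]_d) : X \in lieO B -> isO (Bsq B) (uN X).
Proof.
rewrite inE => /eqP lieX.
have e1 : Bsq B *m (D *m X *m diffV) = diffV^T *m (B *m X) *m diffV.
  by rewrite !mulmxA Bsq_Delta.
have e2 : (diffV^T *m (X^T *m D^T)) *m Bsq B = diffV^T *m (X^T *m B) *m diffV.
  by rewrite -!mulmxA trDelta_Bsq !mulmxA.
have e3 : (diffV^T *m (X^T *m D^T)) *m Bsq B *m (D *m X *m diffV) = 0.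
  by rewrite e2 -!mulmxA [diffV *m (D *m _)]mulmxA diffV_Delta mul0mx !mulmx0.
rewrite /isO /uN [(_ + _)^T]linearD /= trmx1 !trmx_mul; apply/eqP.
rewrite mulmxDl mul1mx !mulmxDr mulmx1 mulmxDl e1 e3 addr0 e2.
by rewrite -addrA -mulmxDl -mulmxDr addrC lieX mulmx0 mul0mx add0r.
Qed.

Lemma uN_inN (X : 'M[F]_d) : X \in lieO B -> inN B (uN X).
Proof.
move=> lieX; have eu : uN X - 1%:M = D *m X *m diffV by rewrite /uN addrAC subrr add0r.
apply/and3P; split; first exact: isO_uN.
  by rewrite eu -mulmxA diffV_Delta mulmx0.
by apply/existsP; exists (X *m diffV); rewrite eu mulmxA.
Qed.

Lemma isO_wV : isO (Bsq B) (wV F d).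
Proof.
rewrite /isO /wV /Bsq tr_block_mx !linearN /= !trmx0 trmx1 !mulmx_block.
rewrite ?mulmx1 ?mulmx0 ?mul0mx ?mul1mx ?addr0 ?add0r ?mulNmx ?mulmxN ?opprK ?oppr0.
by rewrite !mul0mx !mul1mx !mulmx1 oppr0.
Qed.

Lemma isO_iotaV (g : 'M[F]_d) : isO B g -> isO (Bsq B) (iotaV g 1%:M).
Proof.
rewrite /isO => /eqP Og.
rewrite /iotaV /Bsq tr_block_mx !trmx0 trmx1 !mulmx_block.
by rewrite ?mulmx1 ?mulmx0 ?mul0mx ?mul1mx ?addr0 ?add0r Og mul0mx.
Qed.

Local Notation G g X := (wV F d *m uN X *m iotaV g 1%:M).

Lemma wV_uN_iotaV_Delta (g X : 'M[F]_d) :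
  G g X *m D = col_mx (g + X *m (g - 1%:M)) (- (1%:M + X *m (g - 1%:M))).
Proof.
have -> : G g X *m D = wV F d *m (uN X *m col_mx g 1%:M).
  by rewrite -!mulmxA /iotaV /Delta mul_block_col ?mul0mx ?mulmx1 ?addr0 ?add0r.
rewrite /uN mulmxDl mul1mx -!mulmxA /diffV mul_row_col mulNmx !mul1mx.
rewrite /Delta [col_mx _ _ *m (X *m _)]mul_col_mx !mul1mx add_col_mx.
by rewrite /wV mul_block_col mulNmx !mul1mx !mul0mx addr0 add0r.
Qed.

Lemma restrD_wV_uN_iotaV (g X : 'M[F]_d) : restrD (G g X) = g + X *m (g - 1%:M).
Proof. by rewrite /restrD wV_uN_iotaV_Delta col_mxKu. Qed.

Lemma inP_wV_uN_iotaV (g X : 'M[F]_d) :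
  inP B (G g X) -> X *m (g - 1%:M) *+ 2 = - (g + 1%:M).
Proof.
case/andP => _; rewrite restrD_wV_uN_iotaV wV_uN_iotaV_Delta /Delta mul_col_mx mul1mx.
by move=> /eqP /eq_col_mx [_ /esym/eqP]; rewrite addr_eq_opp_double => /eqP.
Qed.

Lemma wV_uN_iotaV_inP (g X : 'M[F]_d) : isO B g -> X \in lieO B ->
  X *m (g - 1%:M) *+ 2 = - (g + 1%:M) -> inP B (G g X).
Proof.
move=> Og lieX /eqP; rewrite -addr_eq_opp_double => /eqP e.
apply/andP; split; first by rewrite !isO_mul ?isO_wV ?isO_uN ?isO_iotaV.
by rewrite restrD_wV_uN_iotaV wV_uN_iotaV_Delta /Delta mul_col_mx mul1mx e.
Qed.

Lemma restrD_of_inP (g X : 'M[F]_d) : (2%:R : F) != 0 ->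
  inP B (G g X) -> restrD (G g X) = (2%:R : F)^-1 *: (g - 1%:M).
Proof.
move=> h2 /inP_wV_uN_iotaV e; rewrite restrD_wV_uN_iotaV.
by rewrite -[LHS](scaler_half_double _ h2) mulrnDl e mulr2n opprD addrA addrK.
Qed.

End Doubling.

Section UnipotentSum.
Variables (F : finFieldType) (C : fieldType) (d : nat) (B : 'M[F]_d) (chi : F -> C).
Hypothesis two_neq0 : (2%:R : F) != 0.

Definition cayley (g : 'M[F]_d) : 'M[F]_d := (g + 1%:M) *m invmx (g - 1%:M).

Lemma cayley_lieO (a : F) (g : 'M[F]_d) : isO B g -> g - 1%:M \in unitmx ->
  a *: cayley g \in lieO B.
Proof.
move=> /eqP Og Ku; set K := g - 1%:M; set X := cayley g.
have XK : X *m K = g + 1%:M by rewrite mulmxKV.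
have e1 : (g + 1%:M)^T *m B *m K = B *m g - g^T *m B.
  rewrite [(_ + _)^T]linearD /= trmx1 mulmxDl mul1mx mulmxBr mulmxDl Og mulmx1.
  by rewrite [B + _]addrC [g^T *m B + _]addrC addrKA.
have e2 : K^T *m B *m (g + 1%:M) = - (B *m g - g^T *m B).
  rewrite [(_ - _)^T]linearB /= trmx1 mulmxBl mul1mx mulmxDr mulmx1 mulmxBl Og.
  by rewrite opprB addrC -addrA addKr.
have KTX : K^T *m (X^T *m B + B *m X) *m K = 0.
  rewrite mulmxDr mulmxDl !mulmxA -trmx_mul XK e1.
  by rewrite mulmxKV // e2 subrr.
have KTu : K^T \in unitmx by rewrite unitmx_tr.
have lieX : X^T *m B + B *m X = 0.
  by rewrite -[LHS](mulKmx KTu) -[K^T *m _](mulmxK Ku) KTX mul0mx mulmx0.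
by rewrite inE linearZ /= -scalemxAl -scalemxAr -scalerDr lieX scaler0.
Qed.

Lemma inN_inP_unit (g : 'M[F]_d) (u : 'M[F]_(d + d)) :
  isO B g -> g - 1%:M \in unitmx ->
  (inN B u && inP B (wV F d *m u *m iotaV g 1%:M))
  = (u == uN (- (2%:R : F)^-1 *: cayley g)).
Proof.
move=> Og Ku; apply/andP/eqP => [[/inN_uN [X ->] /inP_wV_uN_iotaV e] | ->].
  congr uN; rewrite -[X](mulmxK Ku) /cayley scalemxAl; congr (_ *m _).
  by rewrite -(scaler_half_double (X *m _) two_neq0) e scalerN scaleNr.
split; first by apply: uN_inN; apply: cayley_lieO.
apply: wV_uN_iotaV_inP => //; first exact: cayley_lieO.
by rewrite -scalemxAl mulmxKV // scaleNr mulNrn scalerMnr scaler_half_double.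
Qed.

Lemma inN_inP_singular (g : 'M[F]_d) (u : 'M[F]_(d + d)) :
  \det (g - 1%:M) = 0 -> inN B u -> ~~ inP B (wV F d *m u *m iotaV g 1%:M).
Proof.
move=> /eqP dK /inN_uN [X ->]; apply/negP => /inP_wV_uN_iotaV e.
rewrite -det_tr in dK; case/det0P: dK => v v_neq0 hv.
have Kv : (g - 1%:M) *m v^T = 0 by rewrite -[g - 1%:M]trmxK -trmx_mul hv trmx0.
have gv : g *m v^T = v^T by apply/eqP; rewrite -subr_eq0 -{2}[v^T]mul1mx -mulmxBl Kv.
have := congr1 (mulmx^~ v^T) e.
rewrite /= mulr2n mulmxDl -mulmxA Kv mulmx0 addr0 mulNmx mulmxDl gv mul1mx.
move=> /esym/eqP.
rewrite oppr_eq0 -mulr2n -scaler_nat scaler_eq0 (negbTE two_neq0) /= => /eqP v0.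
by move: v_neq0; rewrite -[v]trmxK v0 trmx0 eqxx.
Qed.

Lemma sum_inN_f0V (g : 'M[F]_d) : isO B g ->
  \sum_(u | inN B u) f0V B chi (wV F d *m u *m iotaV g 1%:M)
  = if \det (g - 1%:M) != 0 then chi (\det ((2%:R : F)^-1 *: (g - 1%:M))) else 0.
Proof.
move=> Og; rewrite /f0V -big_mkcondr /=.
rewrite (eq_bigr (fun=> chi (\det ((2%:R : F)^-1 *: (g - 1%:M))))); last first.
  by move=> u /andP [/inN_uN [X ->] /restrD_of_inP ->].
case: ifPn => [dK | /negbNE/eqP dK].
  have Ku : g - 1%:M \in unitmx by rewrite unitmxE unitfE.
  by rewrite (eq_bigl _ _ (fun u => @inN_inP_unit g u Og Ku)) big_pred1_eq.
rewrite big_pred0 // => u.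
apply/negbTE/nandP; case: (boolP (inN B u)) => [/(inN_inP_singular dK) | ].
  by right.
by left.
Qed.

End UnipotentSum.

Section MultiplicativeCharacter.
Variables (F C : fieldType) (chi : F -> C).
Hypothesis chiM : forall x y : F, x != 0 -> y != 0 -> chi (x * y) = chi x * chi y.
Hypothesis chi_neq0 : forall x : F, x != 0 -> chi x != 0.

Lemma chi1 : chi 1 = 1.
Proof.
apply: (mulfI (chi_neq0 (oner_neq0 F))).
by rewrite -chiM ?oner_neq0 // !mulr1.
Qed.

Lemma chiV (a : F) : a != 0 -> chi a^-1 = (chi a)^-1.
Proof.
move=> a0; apply: (mulfI (chi_neq0 a0)).
by rewrite -chiM ?invr_eq0 // !mulfV ?chi_neq0 // chi1.
Qed.

Lemma chi_exprM (a x : F) k : a != 0 -> x != 0 -> chi (a ^+ k * x) = chi a ^+ k * chi x.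
Proof.
move=> a0 x0; elim: k => [|k IH]; first by rewrite !expr0 !mul1r.
by rewrite !exprS -!mulrA chiM ?IH // mulf_neq0 // expf_neq0.
Qed.

End MultiplicativeCharacter.

Section CayleySum.
Variables (F : finFieldType) (C : fieldType) (d : nat) (B : 'M[F]_d) (chi : F -> C).

(* j(pi_0, chi) without its factor |g|^-1/2: JOp B sqrtq chi pi0 is convertible to
   (lie_sqrt_card B sqrtq)^-1 *: jsum pi0. *)
Definition jsum n (Phi : 'M[F]_d -> 'M[C]_n) : 'M[C]_n :=
  \sum_(h | isSO B h && (\det (1%:M + h) != 0)) chi (\det (1%:M + h)) *: Phi h.

Lemma eq_jsum n (Phi Psi : 'M[F]_d -> 'M[C]_n) :
  {in isSO B, Phi =1 Psi} -> jsum Phi = jsum Psi.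
Proof. by move=> ePhi; apply: eq_bigr => h /andP [/ePhi ->]. Qed.

Lemma jsumZ n (a : C) (Phi : 'M[F]_d -> 'M[C]_n) :
  jsum (fun h => a *: Phi h) = a *: jsum Phi.
Proof. by rewrite scaler_sumr; apply: eq_bigr => h _; rewrite !scalerA mulrC. Qed.

Lemma jsum_block n1 n2 (Phi : 'M[F]_d -> 'M[C]_n1) (Psi : 'M[F]_d -> 'M[C]_n2) :
  jsum (fun h => block_mx (Phi h) 0 0 (Psi h)) = block_mx (jsum Phi) 0 0 (jsum Psi).
Proof.
rewrite /jsum; apply: (big_rec3 (fun a b c => a = block_mx b 0 0 c)).
  by rewrite block_mx0.
by move=> h a b c _ ->; rewrite scale_block_mx !scaler0 add_block_mx !addr0.
Qed.

Lemma mulmx_jsumr n (A : 'M[C]_n) (Phi : 'M[F]_d -> 'M[C]_n) :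
  A *m jsum Phi = jsum (fun h => A *m Phi h).
Proof. by rewrite mulmx_sumr; apply: eq_bigr => h _; rewrite scalemxAr. Qed.

Lemma mulmx_jsuml n (A : 'M[C]_n) (Phi : 'M[F]_d -> 'M[C]_n) :
  jsum Phi *m A = jsum (fun h => Phi h *m A).
Proof. by rewrite mulmx_suml; apply: eq_bigr => h _; rewrite scalemxAl. Qed.

Hypothesis detB : \det B != 0.

Lemma jsum_conj n (a : 'M[F]_d) (Phi : 'M[F]_d -> 'M[C]_n) : isO B a ->
  jsum (fun h => Phi (invmx a *m h *m a)) = jsum Phi.
Proof.
move=> Oa; have au := isO_unit detB Oa.
rewrite [RHS](reindex_inj (conj_inj au)) /=.
apply: eq_big => [h | h _]; first by rewrite (isSO_conj detB h Oa) det1D_conj.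
by rewrite det1D_conj.
Qed.

End CayleySum.

Section GammaFormula.
Variables (F : finFieldType) (C : fieldType) (d : nat) (B : 'M[F]_d)
  (sqrtq : C) (chi : F -> C).
Hypothesis chiM : forall x y : F, x != 0 -> y != 0 -> chi (x * y) = chi x * chi y.
Hypothesis chi_neq0 : forall x : F, x != 0 -> chi x != 0.
Hypothesis two_neq0 : (2%:R : F) != 0.
Hypothesis detB : \det B != 0.

Lemma det_opp_sub1 (h : 'M[F]_d) : \det (- h - 1%:M) = (-1) ^+ d * \det (1%:M + h).
Proof. by rewrite -opprD addrC detN. Qed.

Lemma chi_det_half (h : 'M[F]_d) : \det (1%:M + h) != 0 ->
  chi (\det ((2%:R : F)^-1 *: (- h - 1%:M))) = chi (- 2) ^- d * chi (\det (1%:M + h)).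
Proof.
move=> nz; rewrite detZ det_opp_sub1 mulrA -exprMn mulrN1 -invrN chi_exprM //.
  by rewrite chiV ?oppr_eq0 // exprVn.
by rewrite invr_eq0 oppr_eq0.
Qed.

Lemma GammaOp_jsum n (pi : 'M[F]_d -> 'M[C]_n) :
  GammaOp B sqrtq chi pi =
  (chi (- 2) ^- d * (lie_sqrt_card B sqrtq)^-1) *: jsum B chi (fun h => pi (- h)).
Proof.
set c := lie_sqrt_card B sqrtq; rewrite /GammaOp /ZV /MV.
rewrite (eq_bigr (fun g => if \det (g - 1%:M) != 0 then
   (c^-1 * chi (\det ((2%:R : F)^-1 *: (g - 1%:M)))) *: pi g else 0)); last first.
  by move=> g Og; rewrite (sum_inN_f0V chi two_neq0 Og); case: ifP; rewrite ?mulr0 ?scale0r.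
rewrite -big_mkcondr (reindex_inj oppr_inj) /= /jsum scaler_sumr.
apply: eq_big => [h | h /andP [_ nz]]; last first.
  move: nz; rewrite det_opp_sub1 mulf_eq0 signr_eq0 /= => nz.
  by rewrite chi_det_half // scalerA mulrCA mulrA.
rewrite (isON B h) det_opp_sub1 mulf_eq0 signr_eq0 /= /isSO.
apply/andP/andP => [[Oh nz] | [/andP [Oh _] nz]] //.
by rewrite Oh (det_isO_eq1 detB Oh nz) eqxx.
Qed.

End GammaFormula.

Section Representation.
Variables (F : finFieldType) (C : fieldType) (d : nat) (B : 'M[F]_d)
  (sqrtq : C) (chi : F -> C) (n : nat) (pi0 : 'M[F]_d -> 'M[C]_n).
Hypothesis chiM : forall x y : F, x != 0 -> y != 0 -> chi (x * y) = chi x * chi y.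
Hypothesis chi_neq0 : forall x : F, x != 0 -> chi x != 0.
Hypothesis two_neq0 : (2%:R : F) != 0.
Hypothesis detB : \det B != 0.
Hypothesis pi0M : {in isSO B &, forall g h, pi0 (g *m h) = pi0 g *m pi0 h}.

Local Notation jsum := (jsum B chi).
Local Notation scale := (chi (- 2) ^- d * (lie_sqrt_card B sqrtq)^-1).

Lemma JOp_commute (g : 'M[F]_d) : isSO B g ->
  pi0 g *m JOp B sqrtq chi pi0 = JOp B sqrtq chi pi0 *m pi0 g.
Proof.
move=> Sg; have Og : isO B g by case/andP: Sg.
rewrite /JOp -scalemxAr -scalemxAl; congr (_ *: _).
change (pi0 g *m jsum pi0 = jsum pi0 *m pi0 g).
rewrite mulmx_jsumr mulmx_jsuml -(jsum_conj _ detB _ Og).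
apply: eq_jsum => h Sh.
have Sc : isSO B (invmx g *m h *m g) by rewrite (isSO_conj detB h Og).
by rewrite -!pi0M // !mulmxA mulmxV ?mul1mx // (isO_unit detB Og).
Qed.

Lemma isSO_opp1 : ~~ odd d -> isSO B (- 1%:M).
Proof. by rewrite (isSON two_neq0 (isSO1 B)). Qed.

Lemma opp1_commute (g : 'M[F]_d) : ~~ odd d -> isSO B g ->
  pi0 g *m pi0 (- 1%:M) = pi0 (- 1%:M) *m pi0 g.
Proof.
move=> ev Sg; have S1 := isSO_opp1 ev.
by rewrite -!pi0M // mulmxN mulNmx mulmx1 mul1mx.
Qed.

Lemma jsum_opp_even (w : C) : ~~ odd d -> pi0 (- 1%:M) = w%:M ->
  jsum (fun h => pi0 (- h)) = w *: jsum pi0.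
Proof.
move=> ev pi0N1; have S1 := isSO_opp1 ev.
rewrite -jsumZ; apply: eq_jsum => h Sh.
by rewrite -[- h]mulN1mx pi0M // pi0N1 mul_scalar_mx.
Qed.

Lemma GammaOp_plus_ext : odd d -> GammaOp B sqrtq chi (plus_ext B pi0) = scale *: jsum pi0.
Proof.
move=> od; rewrite (GammaOp_jsum _ chiM chi_neq0 two_neq0 detB); congr (_ *: _).
by apply: eq_jsum => h Sh; rewrite /plus_ext (isSON two_neq0 Sh) od /= opprK.
Qed.

Lemma GammaOp_ext_even (w : C) (pi : 'M[F]_d -> 'M[C]_n) :
  ~~ odd d -> pi0 (- 1%:M) = w%:M ->
  {in isO B &, forall g h, pi (g *m h) = pi g *m pi h} -> {in isSO B, pi =1 pi0} ->
  GammaOp B sqrtq chi pi = (scale * w) *: jsum pi0.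
Proof.
move=> ev pi0N1 piM ext; rewrite (GammaOp_jsum _ chiM chi_neq0 two_neq0 detB).
rewrite -[RHS]scalerA -(jsum_opp_even ev pi0N1); apply: congr1; apply: eq_jsum => h Sh.
have S1 := isSO_opp1 ev.
have O1 : isO B (- 1%:M) by case/andP: S1.
have Oh : isO B h by case/andP: Sh.
by rewrite -[- h]mulN1mx piM // pi0M // !ext.
Qed.

Lemma GammaOp_IndSO (w : C) : ~~ odd d -> pi0 (- 1%:M) = w%:M ->
  GammaOp B sqrtq chi (IndSO B pi0)
  = (scale * w) *: block_mx (jsum pi0) 0 0 (jsum pi0).
Proof.
move=> ev pi0N1; rewrite (GammaOp_jsum _ chiM chi_neq0 two_neq0 detB).
have hOu := isO_unit detB (isO_hO B).
rewrite (@eq_jsum _ _ _ _ chi _ _ (fun h => block_mx (pi0 (- h)) 0 0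
   (pi0 (hO B *m - h *m invmx (hO B))))); last first.
  by move=> h Sh; rewrite /IndSO (isSON two_neq0 Sh) ev.
have conj_hO : jsum (fun h => pi0 (hO B *m - h *m invmx (hO B))) = jsum (fun h => pi0 (- h)).
  rewrite -(jsum_conj _ detB _ (isO_hO B)); apply: eq_jsum => h _.
  by rewrite mulmxN mulNmx !mulmxA mulmxV // mul1mx mulmxK.
rewrite jsum_block conj_hO (jsum_opp_even ev pi0N1) -[RHS]scalerA.
by rewrite [w *: block_mx _ _ _ _]scale_block_mx scaler0.
Qed.

End Representation.

Unset Implicit Arguments.

Theorem mainTheorem11 (F : finFieldType) (C : closedFieldType) (sqrtq : C)
  (d : nat) (B : 'M[F]_d) (chi : F -> C) (n : nat) (pi0 : 'M[F]_d -> 'M[C]_n) :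
  odd #|F| ->
  (forall l : nat, l \in [pchar C] -> ~~ (l %| #|F|)%N) ->
  sqrtq ^+ 2 = (#|F|)%:R ->
  B^T = B -> \det B != 0 ->
  (forall x y : F, x != 0 -> y != 0 -> chi (x * y) = chi x * chi y) ->
  (forall x : F, x != 0 -> chi x != 0) ->
  is_irrep (isSO B) pi0 ->
  (~~ odd d -> (2 \notin [pchar C])%N) ->
  exists j w : C,
    [/\ JOp B sqrtq chi pi0 = j%:M,
        (~~ odd d -> pi0 (- 1%:M) = w%:M) &
        GammaSO_eq B sqrtq chi pi0
          ((chi (- 2)) ^- d * j * (if odd d then 1 else w))].
Proof.
move=> oddF _ _ _ detB chiM chi_neq0 irr _.
have two_neq0 := two_neq0_odd_card oddF.
have [[_ pi0M] _ _] := irr.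
have [j eJ] := irrep_scalar_commutant irr (JOp_commute sqrtq chi detB pi0M).
have [w ew] : exists w : C, ~~ odd d -> pi0 (- 1%:M) = w%:M.
  have [_ | ev] := boolP (odd d); first by exists 0.
  have [w ew] := irrep_scalar_commutant irr (fun g => opp1_commute two_neq0 pi0M ev).
  by exists w.
have scale_jsum (u : C) : (chi (- 2) ^- d / lie_sqrt_card B sqrtq * u) *: jsum B chi pi0
                          = (chi (- 2) ^- d * j * u)%:M.
  by rewrite mulrAC -scalerA [_^-1 *: _]eJ scale_scalar_mx mulrAC.
exists j, w; split => //; rewrite /GammaSO_eq.
have [od | ev] := boolP (odd d).
  by rewrite GammaOp_plus_ext // -[_ / _]mulr1 scale_jsum.
split => [pi [[_ piM] _ _] ext | _].
  by rewrite (GammaOp_ext_even sqrtq chiM chi_neq0 two_neq0 detB pi0M ev (ew ev) piM ext).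
rewrite (GammaOp_IndSO sqrtq chiM chi_neq0 two_neq0 detB pi0M ev (ew ev)).
by rewrite scale_block_mx scaler0 scale_jsum -scalar_mx_block.
Qed.
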